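(* Let $\mathcal{X}=\mathcal{UD}(\chi,T',\theta)$ be the crystal on $\mathbb{Z}^6$ obtained by ultra-discretizing the positive geometric crystal $\chi$ of type $G_2^{(1)}$ described in the context, and let $B_\infty$ be the $D_4^{(3)}$-crystal described in the context. Then $\mathcal{X}$ is isomorphic to $B_\infty$ as a crystal, i.e. there is a bijection $\Omega:\mathcal{X}\to B_\infty$ such that $\Omega\circ\tilde e_i=\tilde e_i\circ\Omega$, $\Omega\circ\tilde f_i=\tilde f_i\circ\Omega$, $\varepsilon_i\circ\Omega=\varepsilon_i$ and $\varphi_i\circ\Omega=\varphi_i$ (hence also $\mathrm{wt}_i\circ\Omega=\mathrm{wt}_i$) for all $i\in\{0,1,2\}$.
   Context: Index set $I=\{0,1,2\}$. The affine Lie algebra $\mathfrak g$ of type $G_2^{(1)}$ has Cartan matrix $(a_{ij})_{i,j=0,1,2}$ with rows $(2,-1,0),(-1,2,-1),(0,-3,2)$; its Langlands dual is of type $D_4^{(3)}$, whose Cartan matrix has rows $(2,-1,0),(-1,2,-3),(0,-1,2)$. The geometric crystal $\chi$. Its underlying variety is the algebraic torus $T'=(\mathbb C^\times)^6$ with coordinates $x=(x_0,\dots,x_5)$ (realized in the paper, via the positive structure $\theta$, as $\{Y_0(x_0)Y_1(x_1)Y_2(x_2)Y_1(x_3)Y_2(x_4)Y_1(x_5)v\}$ inside the 15-dimensional fundamental representation $W(\varpi_1)$ of $G_2^{(1)}$, $v$ a highest vector; in the coordinates $x$ the structure is as follows). For $c\in\mathbb C^\times$: $i=1$: put $a=\frac{x_0}{x_1}$,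 $b=\frac{x_0x_2^3}{x_1^2x_3}$, $d=\frac{x_0x_2^3x_4^3}{x_1^2x_3^2x_5}$. Then $e_1^c(x)=(x_0,\mathcal C_1x_1,x_2,\mathcal C_3x_3,x_4,\mathcal C_5x_5)$ with $\mathcal C_1=\frac{ca+b+d}{a+b+d}$, $\mathcal C_3=\frac{ca+cb+d}{ca+b+d}$, $\mathcal C_5=\frac{c(a+b+d)}{ca+cb+d}$; $\varepsilon_1(x)=a+b+d$; $\gamma_1(x)=\frac{x_1^2x_3^2x_5^2}{x_0x_2^3x_4^3}$. $i=2$: put $p=\frac{x_1}{x_2}$, $q=\frac{x_1x_3}{x_2^2x_4}$. Then $e_2^c(x)=(x_0,x_1,\mathcal C_2x_2,x_3,\mathcal C_4x_4,x_5)$ with $\mathcal C_2=\frac{cp+q}{p+q}$, $\mathcal C_4=\frac{c(p+q)}{cp+q}$; $\varepsilon_2(x)=p+q$; $\gamma_2(x)=\frac{x_2^2x_4^2}{x_1x_3x_5}$. $i=0$: put $D=c^2x_0^2x_2^3x_3+x_1x_2^3x_3^2x_5+cx_0\big(x_1x_3^3+3x_1x_2x_3^2x_4+3x_1x_2^2x_3x_4^2+x_2^3(x_3^2+x_1x_4^3+x_1x_3x_5)\big)$, $E=x_0^2x_2^3x_3+x_1x_2^3x_3^2x_5+x_0\big(x_1x_3^3+3x_1x_2x_3^2x_4+3x_1x_2^2x_3x_4^2+x_2^3(x_3^2+x_1x_4^3+x_1x_3x_5)\big)$, $F=cx_0^2x_2^3x_3+x_1x_2^3x_3^2x_5+x_0\big(cx_1x_3^3+3cx_1x_2x_3^2x_4+3cx_1x_2^2x_3x_4^2+x_2^3(x_3^2+cx_1x_4^3+cx_1x_3x_5)\big)$,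 $G=cx_0^2x_2^3x_3+x_1x_2^3x_3^2x_5+x_0\big(x_1x_3^3+(2+c)x_1x_2x_3^2x_4+(1+2c)x_1x_2^2x_3x_4^2+x_2^3(x_3^2+cx_1x_4^3+cx_1x_3x_5)\big)$, $H=cx_0^2x_2^3x_3+x_1x_2^3x_3^2x_5+x_0\big(x_1x_3^3+3x_1x_2x_3^2x_4+3x_1x_2^2x_3x_4^2+x_2^3(x_3^2+x_1x_4^3+cx_1x_3x_5)\big)$. Then $e_0^c(x)=\big(\frac{D}{cE}x_0,\frac{F}{cE}x_1,\frac{G}{cE}x_2,\frac{DH}{c^2EF}x_3,\frac{D}{cG}x_4,\frac{D}{cH}x_5\big)$, $\varepsilon_0(x)=\frac{E}{x_0^3x_2^3x_3}$, $\gamma_0(x)=\frac{x_0^2}{x_1x_3x_5}$. All these are ratios of polynomials with positive coefficients (positive structure). Ultra-discretization. For a rational function $f(c,x)=g/h$ with $g,h$ polynomials in $c,x_0,\dots,x_5$ with positive coefficients, and $(k,n)\in\mathbb Z\times\mathbb Z^6$, set $\mathcal{UD}(f)(k,n)=\deg_t f(t^k,t^{n_0},\dots,t^{n_5})$, the degree (order of pole at $t=\infty$) in the variable $t$; equivalently $\max$ over monomials of $g$ of the linear form given by the exponents, minus the same for $h$. The crystal $\mathcal X=\mathcal{UD}(\chi,T',\theta)$ has underlying set $\mathbb Z^6\ni n=(n_0,\dots,n_5)$ and: if $e_i^c(x)=(x_0R_0(c,x),\dots,x_5R_5(c,x))$, then $\tilde e_i(n)=(n_j+\mathcal{UD}(R_j)(1,n))_{j=0}^5$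 and $\tilde f_i(n)=(n_j+\mathcal{UD}(R_j)(-1,n))_{j=0}^5$; $\mathrm{wt}_i(n)=\mathcal{UD}(\gamma_i)(n)$, $\varepsilon_i(n)=\mathcal{UD}(\varepsilon_i)(n)$, $\varphi_i(n)=\varepsilon_i(n)+\mathrm{wt}_i(n)$. The crystal $B_\infty$ of type $D_4^{(3)}$. Its underlying set is $\{b=(b_1,b_2,b_3,\bar b_3,\bar b_2,\bar b_1)\in\mathbb Z^6: b_3\equiv\bar b_3 \pmod 2\}$. Write $(y)_+=\max(y,0)$. Set $s(b)=b_1+b_2+\frac{b_3+\bar b_3}{2}+\bar b_2+\bar b_1$, $z_1=\bar b_1-b_1$, $z_2=\bar b_2-\bar b_3$, $z_3=b_3-b_2$, $z_4=(\bar b_3-b_3)/2$, and $\max A=\max(0,z_1,z_1+z_2,z_1+z_2+3z_4,z_1+z_2+z_3+3z_4,2z_1+z_2+z_3+3z_4)$. Then $\varepsilon_1(b)=\bar b_1+(\bar b_3-\bar b_2+(b_2-b_3)_+)_+$, $\varphi_1(b)=b_1+(b_3-b_2+(\bar b_2-\bar b_3)_+)_+$; $\varepsilon_2(b)=\bar b_2+\frac12(b_3-\bar b_3)_+$, $\varphi_2(b)=b_2+\frac12(\bar b_3-b_3)_+$; $\varepsilon_0(b)=-s(b)+\max A-(2z_1+z_2+z_3+3z_4)$, $\varphi_0(b)=-s(b)+\max A$; $\mathrm{wt}_i=\varphi_i-\varepsilon_i$. $\tilde e_1b$ equals: $(\dots,\bar b_2+1,\bar b_1-1)$ if $\bar b_2-\bar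 b_3\ge(b_2-b_3)_+$; $(\dots,b_3+1,\bar b_3-1,\dots)$ if $\bar b_2-\bar b_3<0\le b_3-b_2$; $(b_1+1,b_2-1,\dots)$ if $(\bar b_2-\bar b_3)_+<b_2-b_3$. $\tilde f_1b$ equals: $(b_1-1,b_2+1,\dots)$ if $(\bar b_2-\bar b_3)_+\le b_2-b_3$; $(\dots,b_3-1,\bar b_3+1,\dots)$ if $\bar b_2-\bar b_3\le0<b_3-b_2$; $(\dots,\bar b_2-1,\bar b_1+1)$ if $\bar b_2-\bar b_3>(b_2-b_3)_+$. $\tilde e_2b$ equals $(\dots,\bar b_3+2,\bar b_2-1,\dots)$ if $\bar b_3\ge b_3$, and $(\dots,b_2+1,b_3-2,\dots)$ if $\bar b_3<b_3$. $\tilde f_2b$ equals $(\dots,b_2-1,b_3+2,\dots)$ if $\bar b_3\le b_3$, and $(\dots,\bar b_3-2,\bar b_2+1,\dots)$ if $\bar b_3>b_3$. (Here ''$\dots$'' means the unlisted coordinates are unchanged.) For $\tilde e_0$ consider the conditions $(E_1)$: $z_1+z_2+z_3+3z_4<0$, $z_1+z_2+3z_4<0$, $z_1+z_2<0$, $z_1<0$; $(E_2)$: $z_1+z_2+z_3+3z_4<0$, $z_2+3z_4<0$, $z_2<0$, $z_1\ge0$; $(E_3)$: $z_1+z_3+3z_4<0$, $z_3+3z_4<0$, $z_4<0$, $z_2\ge0$, $z_1+z_2\ge0$; $(E_4)$: $z_1+z_2+3z_4\ge0$, $z_2+3z_4\ge0$, $z_4\ge0$, $z_3<0$, $z_1+z_3<0$;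 $(E_5)$: $z_1+z_2+z_3+3z_4\ge0$, $z_3+3z_4\ge0$, $z_3\ge0$, $z_1<0$; $(E_6)$: $z_1+z_2+z_3+3z_4\ge0$, $z_1+z_3+3z_4\ge0$, $z_1+z_3\ge0$, $z_1\ge0$; and let $(F_j)$ be $(E_j)$ with $\ge$ replaced by $>$ and $<$ replaced by $\le$. Then $\tilde e_0b$ equals, under $(E_1)$ through $(E_6)$ respectively: $(b_1-1,\dots)$; $(\dots,b_3-1,\bar b_3-1,\dots,\bar b_1+1)$; $(\dots,b_3-2,\dots,\bar b_2+1,\dots)$; $(\dots,b_2-1,\dots,\bar b_3+2,\dots)$; $(b_1-1,\dots,b_3+1,\bar b_3+1,\dots)$; $(\dots,\bar b_1+1)$. And $\tilde f_0b$ equals, under $(F_1)$ through $(F_6)$ respectively: $(b_1+1,\dots)$; $(\dots,b_3+1,\bar b_3+1,\dots,\bar b_1-1)$; $(\dots,b_3+2,\dots,\bar b_2-1,\dots)$; $(\dots,b_2+1,\dots,\bar b_3-2,\dots)$; $(b_1+1,\dots,b_3-1,\bar b_3-1,\dots)$; $(\dots,\bar b_1-1)$. $B_\infty$ is the limit of the coherent family of perfect crystals of type $D_4^{(3)}$. *)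

From HB Require Import structures.
From mathcomp Require Import all_boot all_order all_algebra.
Set Implicit Arguments. Unset Strict Implicit. Unset Printing Implicit Defensive.
Import Order.TTheory GRing.Theory Num.Theory.
Local Open Scope ring_scope.

Definition vec6 := {ffun 'I_6 -> int}.

Definition mk6 (a0 a1 a2 a3 a4 a5 : int) : vec6 :=
  [ffun j : 'I_6 => nth 0 [:: a0; a1; a2; a3; a4; a5] j].

(* Subtraction-free rational expressions in the variables             *)
(* c, x_0, ..., x_5 (variable index 0 is c, index j.+1 is x_j).       *)
Inductive pexpr : Type :=
| PV  : nat -> pexpr
| PK  : nat -> pexpr               (* the positive constant k.+1 *)
| PAdd : pexpr -> pexpr -> pexpr
| PMul : pexpr -> pexpr -> pexpr
| PDiv : pexpr -> pexpr -> pexpr.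

(* Laurent polynomials with positive coefficients, as lists of monomials
   (coefficient, exponent vector of length 7 : (c, x_0, ..., x_5)). *)
Definition mono := (nat * seq int)%type.
Definition ppoly := seq mono.

Definition mono_mul (m1 m2 : mono) : mono :=
  ((m1.1 * m2.1)%N, [seq p.1 + p.2 | p <- zip m1.2 m2.2]).
Definition ppoly_mul (p q : ppoly) : ppoly :=
  [seq mono_mul m1 m2 | m1 <- p, m2 <- q].
Definition ppoly_var (j : nat) : ppoly :=
  [:: (1%N, [seq ((i == j) : nat)%:Z | i <- iota 0 7])].
Definition ppoly_const (k : nat) : ppoly := [:: (k.+1, nseq 7 0)].

Fixpoint to_frac (e : pexpr) : ppoly * ppoly :=
  match e with
  | PV j => (ppoly_var j, ppoly_const 0)
  | PK k => (ppoly_const k, ppoly_const 0)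
  | PAdd e1 e2 => let (g1, h1) := to_frac e1 in let (g2, h2) := to_frac e2 in
      (ppoly_mul g1 h2 ++ ppoly_mul g2 h1, ppoly_mul h1 h2)
  | PMul e1 e2 => let (g1, h1) := to_frac e1 in let (g2, h2) := to_frac e2 in
      (ppoly_mul g1 g2, ppoly_mul h1 h2)
  | PDiv e1 e2 => let (g1, h1) := to_frac e1 in let (g2, h2) := to_frac e2 in
      (ppoly_mul g1 h2, ppoly_mul h1 g2)
  end.

Definition maxl (s : seq int) : int := foldr Num.max (head 0 s) s.

Definition mono_lin (k : int) (n : vec6) (m : mono) : int :=
  \sum_(i < 7) nth 0 m.2 i * nth 0 (k :: [seq n j | j <- enum 'I_6]) i.

(* deg_t g(t^k, t^n_0, ..., t^n_5) for g with positive coefficients. *)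
Definition UDpoly (p : ppoly) (k : int) (n : vec6) : int :=
  maxl [seq mono_lin k n m | m <- p].

Definition UD (e : pexpr) (k : int) (n : vec6) : int :=
  UDpoly (to_frac e).1 k n - UDpoly (to_frac e).2 k n.

Declare Scope pexpr_scope.
Delimit Scope pexpr_scope with PE.
Local Notation "a + b" := (PAdd a b) : pexpr_scope.
Local Notation "a * b" := (PMul a b) : pexpr_scope.
Local Notation "a / b" := (PDiv a b) : pexpr_scope.
Local Open Scope pexpr_scope.

Definition vc : pexpr := PV 0.
Definition vx (j : nat) : pexpr := PV j.+1.
Definition one : pexpr := PK 0.
Definition cst (k : nat) : pexpr := PK k.-1.   (* positive constant k >= 1 *)
Fixpoint ppow (e : pexpr) (n : nat) : pexpr :=
  match n with 0 => one | 1 => e | n'.+1 => e * ppow e n' end.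

Notation "x^ j" := (vx j) (at level 2) : pexpr_scope.

Definition a1 : pexpr := vx 0 / vx 1.
Definition b1 : pexpr := (vx 0 * ppow (vx 2) 3) / (ppow (vx 1) 2 * vx 3).
Definition d1 : pexpr :=
  (vx 0 * ppow (vx 2) 3 * ppow (vx 4) 3) / (ppow (vx 1) 2 * ppow (vx 3) 2 * vx 5).
Definition C1 : pexpr := (vc * a1 + b1 + d1) / (a1 + b1 + d1).
Definition C3 : pexpr := (vc * a1 + vc * b1 + d1) / (vc * a1 + b1 + d1).
Definition C5 : pexpr := (vc * (a1 + b1 + d1)) / (vc * a1 + vc * b1 + d1).
Definition eps1 : pexpr := a1 + b1 + d1.
Definition gam1 : pexpr :=
  (ppow (vx 1) 2 * ppow (vx 3) 2 * ppow (vx 5) 2) / (vx 0 * ppow (vx 2) 3 * ppow (vx 4) 3).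

Definition p2 : pexpr := vx 1 / vx 2.
Definition q2 : pexpr := (vx 1 * vx 3) / (ppow (vx 2) 2 * vx 4).
Definition C2 : pexpr := (vc * p2 + q2) / (p2 + q2).
Definition C4 : pexpr := (vc * (p2 + q2)) / (vc * p2 + q2).
Definition eps2 : pexpr := p2 + q2.
Definition gam2 : pexpr := (ppow (vx 2) 2 * ppow (vx 4) 2) / (vx 1 * vx 3 * vx 5).

Definition x0 := vx 0. Definition x1 := vx 1. Definition x2 := vx 2.
Definition x3 := vx 3. Definition x4 := vx 4. Definition x5 := vx 5.

Definition D0 : pexpr :=
  ppow vc 2 * ppow x0 2 * ppow x2 3 * x3 + x1 * ppow x2 3 * ppow x3 2 * x5
  + vc * x0 * (x1 * ppow x3 3 + cst 3 * x1 * x2 * ppow x3 2 * x4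
               + cst 3 * x1 * ppow x2 2 * x3 * ppow x4 2
               + ppow x2 3 * (ppow x3 2 + x1 * ppow x4 3 + x1 * x3 * x5)).
Definition E0 : pexpr :=
  ppow x0 2 * ppow x2 3 * x3 + x1 * ppow x2 3 * ppow x3 2 * x5
  + x0 * (x1 * ppow x3 3 + cst 3 * x1 * x2 * ppow x3 2 * x4
          + cst 3 * x1 * ppow x2 2 * x3 * ppow x4 2
          + ppow x2 3 * (ppow x3 2 + x1 * ppow x4 3 + x1 * x3 * x5)).
Definition F0 : pexpr :=
  vc * ppow x0 2 * ppow x2 3 * x3 + x1 * ppow x2 3 * ppow x3 2 * x5
  + x0 * (vc * x1 * ppow x3 3 + cst 3 * vc * x1 * x2 * ppow x3 2 * x4
          + cst 3 * vc * x1 * ppow x2 2 * x3 * ppow x4 2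
          + ppow x2 3 * (ppow x3 2 + vc * x1 * ppow x4 3 + vc * x1 * x3 * x5)).
Definition G0 : pexpr :=
  vc * ppow x0 2 * ppow x2 3 * x3 + x1 * ppow x2 3 * ppow x3 2 * x5
  + x0 * (x1 * ppow x3 3 + (cst 2 + vc) * x1 * x2 * ppow x3 2 * x4
          + (one + cst 2 * vc) * x1 * ppow x2 2 * x3 * ppow x4 2
          + ppow x2 3 * (ppow x3 2 + vc * x1 * ppow x4 3 + vc * x1 * x3 * x5)).
Definition H0 : pexpr :=
  vc * ppow x0 2 * ppow x2 3 * x3 + x1 * ppow x2 3 * ppow x3 2 * x5
  + x0 * (x1 * ppow x3 3 + cst 3 * x1 * x2 * ppow x3 2 * x4
          + cst 3 * x1 * ppow x2 2 * x3 * ppow x4 2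
          + ppow x2 3 * (ppow x3 2 + x1 * ppow x4 3 + vc * x1 * x3 * x5)).
Definition eps0 : pexpr := E0 / (ppow x0 3 * ppow x2 3 * x3).
Definition gam0 : pexpr := ppow x0 2 / (x1 * x3 * x5).

(* The factors R_j(c, x) with e_i^c(x) = (x_j R_j(c, x))_j. *)
Definition Rfac (i : 'I_3) (j : 'I_6) : pexpr :=
  match val i, val j with
  | 1%N, 1%N => C1 | 1%N, 3%N => C3 | 1%N, 5%N => C5 | 1%N, _ => one
  | 2%N, 2%N => C2 | 2%N, 4%N => C4 | 2%N, _ => one
  | _, 0%N => D0 / (vc * E0)
  | _, 1%N => F0 / (vc * E0)
  | _, 2%N => G0 / (vc * E0)
  | _, 3%N => (D0 * H0) / (ppow vc 2 * E0 * F0)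
  | _, 4%N => D0 / (vc * G0)
  | _, _ => D0 / (vc * H0)
  end.

Definition epsG (i : 'I_3) : pexpr :=
  match val i with 0%N => eps0 | 1%N => eps1 | _ => eps2 end.
Definition gamG (i : 'I_3) : pexpr :=
  match val i with 0%N => gam0 | 1%N => gam1 | _ => gam2 end.

Local Close Scope pexpr_scope.

Definition eX (i : 'I_3) (n : vec6) : vec6 := [ffun j => n j + UD (Rfac i j) 1 n].
Definition fX (i : 'I_3) (n : vec6) : vec6 := [ffun j => n j + UD (Rfac i j) (-1) n].
(* gamma_i does not involve c, so the value of k is irrelevant. *)
Definition wtX (i : 'I_3) (n : vec6) : int := UD (gamG i) 0 n.
Definition epsX (i : 'I_3) (n : vec6) : int := UD (epsG i) 0 n.
Definition phiX (i : 'I_3) (n : vec6) : int := epsX i n + wtX i n.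

Definition inB (b : vec6) : bool := odd `|b (inord 2)|%N == odd `|b (inord 3)|%N.
Definition Binf := {b : vec6 | inB b}.

Section Binf_ops.
Variable b : vec6.
Let b1 := b (inord 0). Let b2 := b (inord 1). Let b3 := b (inord 2).
Let bb3 := b (inord 3). Let bb2 := b (inord 4). Let bb1 := b (inord 5).

Definition pos (y : int) : int := Num.max y 0.
Definition half (y : int) : int := (y %/ 2)%Z.

Definition sB : int := b1 + b2 + half (b3 + bb3) + bb2 + bb1.
Definition z1 : int := bb1 - b1.
Definition z2 : int := bb2 - bb3.
Definition z3 : int := b3 - b2.
Definition z4 : int := half (bb3 - b3).
Definition maxA : int :=
  maxl [:: 0; z1; z1 + z2; z1 + z2 + 3 * z4; z1 + z2 + z3 + 3 * z4;
           2 * z1 + z2 + z3 + 3 * z4].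

Definition epsB_ (i : 'I_3) : int :=
  match val i with
  | 0%N => - sB + maxA - (2 * z1 + z2 + z3 + 3 * z4)
  | 1%N => bb1 + pos (bb3 - bb2 + pos (b2 - b3))
  | _ => bb2 + half (pos (b3 - bb3))
  end.
Definition phiB_ (i : 'I_3) : int :=
  match val i with
  | 0%N => - sB + maxA
  | 1%N => b1 + pos (b3 - b2 + pos (bb2 - bb3))
  | _ => b2 + half (pos (bb3 - b3))
  end.

Definition E1 := [&& z1 + z2 + z3 + 3 * z4 < 0, z1 + z2 + 3 * z4 < 0, z1 + z2 < 0 & z1 < 0].
Definition E2 := [&& z1 + z2 + z3 + 3 * z4 < 0, z2 + 3 * z4 < 0, z2 < 0 & z1 >= 0].
Definition E3 := [&& z1 + z3 + 3 * z4 < 0, z3 + 3 * z4 < 0, z4 < 0, z2 >= 0 & z1 + z2 >= 0].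
Definition E4 := [&& z1 + z2 + 3 * z4 >= 0, z2 + 3 * z4 >= 0, z4 >= 0, z3 < 0 & z1 + z3 < 0].
Definition E5 := [&& z1 + z2 + z3 + 3 * z4 >= 0, z3 + 3 * z4 >= 0, z3 >= 0 & z1 < 0].
Definition E6 := [&& z1 + z2 + z3 + 3 * z4 >= 0, z1 + z3 + 3 * z4 >= 0, z1 + z3 >= 0 & z1 >= 0].
Definition F1 := [&& z1 + z2 + z3 + 3 * z4 <= 0, z1 + z2 + 3 * z4 <= 0, z1 + z2 <= 0 & z1 <= 0].
Definition F2 := [&& z1 + z2 + z3 + 3 * z4 <= 0, z2 + 3 * z4 <= 0, z2 <= 0 & z1 > 0].
Definition F3 := [&& z1 + z3 + 3 * z4 <= 0, z3 + 3 * z4 <= 0, z4 <= 0, z2 > 0 & z1 + z2 > 0].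
Definition F4 := [&& z1 + z2 + 3 * z4 > 0, z2 + 3 * z4 > 0, z4 > 0, z3 <= 0 & z1 + z3 <= 0].
Definition F5 := [&& z1 + z2 + z3 + 3 * z4 > 0, z3 + 3 * z4 > 0, z3 > 0 & z1 <= 0].
Definition F6 := [&& z1 + z2 + z3 + 3 * z4 > 0, z1 + z3 + 3 * z4 > 0, z1 + z3 > 0 & z1 > 0].

Definition eB_ (i : 'I_3) : vec6 :=
  match val i with
  | 0%N =>
      if E1 then mk6 (b1 - 1) b2 b3 bb3 bb2 bb1
      else if E2 then mk6 b1 b2 (b3 - 1) (bb3 - 1) bb2 (bb1 + 1)
      else if E3 then mk6 b1 b2 (b3 - 2) bb3 (bb2 + 1) bb1
      else if E4 then mk6 b1 (b2 - 1) b3 (bb3 + 2) bb2 bb1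
      else if E5 then mk6 (b1 - 1) b2 (b3 + 1) (bb3 + 1) bb2 bb1
      else mk6 b1 b2 b3 bb3 bb2 (bb1 + 1)
  | 1%N =>
      if bb2 - bb3 >= pos (b2 - b3) then mk6 b1 b2 b3 bb3 (bb2 + 1) (bb1 - 1)
      else if (bb2 - bb3 < 0) && (0 <= b3 - b2) then mk6 b1 b2 (b3 + 1) (bb3 - 1) bb2 bb1
      else (* pos (bb2 - bb3) < b2 - b3 *) mk6 (b1 + 1) (b2 - 1) b3 bb3 bb2 bb1
  | _ =>
      if bb3 >= b3 then mk6 b1 b2 b3 (bb3 + 2) (bb2 - 1) bb1
      else mk6 b1 (b2 + 1) (b3 - 2) bb3 bb2 bb1
  end.

Definition fB_ (i : 'I_3) : vec6 :=
  match val i with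
  | 0%N =>
      if F1 then mk6 (b1 + 1) b2 b3 bb3 bb2 bb1
      else if F2 then mk6 b1 b2 (b3 + 1) (bb3 + 1) bb2 (bb1 - 1)
      else if F3 then mk6 b1 b2 (b3 + 2) bb3 (bb2 - 1) bb1
      else if F4 then mk6 b1 (b2 + 1) b3 (bb3 - 2) bb2 bb1
      else if F5 then mk6 (b1 + 1) b2 (b3 - 1) (bb3 - 1) bb2 bb1
      else mk6 b1 b2 b3 bb3 bb2 (bb1 - 1)
  | 1%N =>
      if pos (bb2 - bb3) <= b2 - b3 then mk6 (b1 - 1) (b2 + 1) b3 bb3 bb2 bb1
      else if (bb2 - bb3 <= 0) && (0 < b3 - b2) then mk6 b1 b2 (b3 - 1) (bb3 + 1) bb2 bb1
      else (* bb2 - bb3 > pos (b2 - b3) *) mk6 b1 b2 b3 bb3 (bb2 - 1) (bb1 + 1)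
  | _ =>
      if bb3 <= b3 then mk6 b1 (b2 - 1) (b3 + 2) bb3 bb2 bb1
      else mk6 b1 b2 b3 (bb3 - 2) (bb2 + 1) bb1
  end.
End Binf_ops.

Definition eB (i : 'I_3) (b : vec6) : vec6 := eB_ b i.
Definition fB (i : 'I_3) (b : vec6) : vec6 := fB_ b i.
Definition epsB (i : 'I_3) (b : vec6) : int := epsB_ b i.
Definition phiB (i : 'I_3) (b : vec6) : int := phiB_ b i.
Definition wtB (i : 'I_3) (b : vec6) : int := phiB i b - epsB i b.

From Pilot Require Import Defs.
From HB Require Import structures.
From mathcomp Require Import all_boot all_order all_algebra.
From mathcomp Require Import zify.
Set Implicit Arguments. Unset Strict Implicit. Unset Printing Implicit Defensive.
Import Order.TTheory GRing.Theory Num.Theory.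
Local Open Scope ring_scope.

(** The ultra-discretization of a subtraction-free rational expression is its max-plus
    tropicalization, so all the data of the crystal X are piecewise-linear in n.  The map
      Omega n = (n_5, n_4 - n_5, n_3 - 2 n_4, 2 n_2 - n_3, n_1 - n_2, n_0 - n_1)
    is a linear bijection of Z^6 onto B_infinity (its image is cut out by the parity
    condition on b_3 and bb_3) which matches the weights.  For i = 0, the tropicalized E is a linear form plus
    max A at Omega n, which gives epsilon_0; on each region (E_r), resp. (F_r), the
    tropicalized D, E, F, G, H are all attained at one monomial, so e_0, resp. f_0, acts
    on X as a translation, and Omega maps it to the move of B_infinity on that region. *)

(** * Ultra-discretization as tropicalization *)

Lemma foldr_max_ub d (T : orderType d) (a : T) s y :
  y \in a :: s -> (y <= foldr Order.max a s)%O.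
Proof.
elim: s => [|x s IH] /=; first by rewrite inE => /eqP ->.
rewrite le_max !inE => /or3P [ya|/eqP ->|ys]; first by rewrite IH ?orbT // inE ya.
- by rewrite lexx.
- by rewrite IH ?orbT // inE ys orbT.
Qed.

Lemma foldr_max_mem d (T : orderType d) (a : T) s : foldr Order.max a s \in a :: s.
Proof.
elim: s => [|x s IH] /=; first exact: mem_head.
case: (leP x (foldr Order.max a s)) => _; last by rewrite !inE eqxx orbT.
by move: IH; rewrite !inE => /orP [] ->; rewrite ?orbT.
Qed.

Lemma maxl_ub s y : y \in s -> y <= maxl s.
Proof. by case: s => [//|x s] ys; apply: foldr_max_ub; rewrite inE ys orbT. Qed.

Lemma maxl_mem s : s != [::] -> maxl s \in s.
Proof.
case: s => [//|x s] _; have := foldr_max_mem x (x :: s).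
by rewrite /maxl inE => /orP [/eqP ->|//]; apply: mem_head.
Qed.

Lemma maxl1 x : maxl [:: x] = x.
Proof. by rewrite /maxl /= maxxx. Qed.

Lemma maxl_eq s v : v \in s -> all (fun y => y <= v) s -> maxl s = v.
Proof.
move=> vs /allP ub; apply/eqP; rewrite eq_le maxl_ub // andbT.
by apply/ub/maxl_mem; case: s vs {ub}.
Qed.

Definition ppoly_wf (p : ppoly) : bool :=
  (p != [::]) && all (fun m : mono => size m.2 == 7%N) p.

Lemma mono_lin_mul k n (m1 m2 : mono) : size m1.2 = 7%N -> size m2.2 = 7%N ->
  mono_lin k n (mono_mul m1 m2) = mono_lin k n m1 + mono_lin k n m2.
Proof.
move=> s1 s2; rewrite /mono_lin -big_split; apply: eq_bigr => i _ /=.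
by rewrite (nth_map (0, 0)) ?size_zip ?s1 ?s2 ?minnn // nth_zip ?s1 ?s2 //= mulrDl.
Qed.

Lemma ppoly_wf_mul p q : ppoly_wf p -> ppoly_wf q -> ppoly_wf (ppoly_mul p q).
Proof.
case/andP=> p0 /allP sp /andP [q0 /allP sq]; apply/andP; split.
  by case: p p0 {sp} => // m1 p _; case: q q0 {sq}.
apply/allP=> m /allpairsP [[m1 m2] /= [i1 i2 ->]] /=.
by rewrite size_map size_zip (eqP (sp _ i1)) (eqP (sq _ i2)).
Qed.

Lemma ppoly_wf_cat p q : ppoly_wf p -> ppoly_wf q -> ppoly_wf (p ++ q).
Proof.
case/andP=> p0 sp /andP [_ sq]; rewrite /ppoly_wf all_cat sp sq andbT.
by case: p p0 {sp}.
Qed.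

Lemma UDpoly_mul p q k n : ppoly_wf p -> ppoly_wf q ->
  UDpoly (ppoly_mul p q) k n = UDpoly p k n + UDpoly q k n.
Proof.
case/andP=> p0 /allP sp /andP [q0 /allP sq]; rewrite /UDpoly.
have nz (s : ppoly) : s != [::] -> [seq mono_lin k n m | m <- s] != [::] by case: s.
have /mapP [m1 i1 e1] := maxl_mem (nz _ p0).
have /mapP [m2 i2 e2] := maxl_mem (nz _ q0).
apply: maxl_eq.
  apply/mapP; exists (mono_mul m1 m2); first by apply/allpairsP; exists (m1, m2).
  by rewrite mono_lin_mul ?(eqP (sp _ i1)) ?(eqP (sq _ i2)) // e1 e2.
apply/allP => _ /mapP [_ /allpairsP [[a b] /= [ia ib ->]] ->].
rewrite mono_lin_mul ?(eqP (sp _ ia)) ?(eqP (sq _ ib)) //.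
by apply: lerD; apply: maxl_ub; apply: map_f.
Qed.

Lemma UDpoly_cat p q k n : ppoly_wf p -> ppoly_wf q ->
  UDpoly (p ++ q) k n = Num.max (UDpoly p k n) (UDpoly q k n).
Proof.
case/andP=> p0 _ /andP [q0 _]; rewrite /UDpoly map_cat.
have sp0 : [seq mono_lin k n m | m <- p] != [::] by case: p p0.
have sq0 : [seq mono_lin k n m | m <- q] != [::] by case: q q0.
move: sp0 sq0; set sp := map _ p; set sq := map _ q => sp0 sq0.
apply: maxl_eq.
  by rewrite mem_cat; case: (leP (maxl sp) (maxl sq)) => _; rewrite maxl_mem ?orbT.
by apply/allP => y; rewrite mem_cat le_max => /orP [] /maxl_ub ->; rewrite ?orbT.
Qed.

Lemma UDpoly_const j k n : UDpoly (ppoly_const j) k n = 0.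
Proof.
rewrite /UDpoly /ppoly_const map_cons maxl1 /mono_lin big1 // => i _.
by rewrite nth_nseq if_same mul0r.
Qed.

(** Max-plus evaluation at [c = t^k] and [x_j = t^(n_j)]. *)
Fixpoint trop (e : pexpr) (k : int) (n : vec6) : int :=
  match e with
  | PV 0 => k
  | PV j.+1 => if (j < 6)%N then n (inord j) else 0
  | PK _ => 0
  | PAdd a b => Num.max (trop a k n) (trop b k n)
  | PMul a b => trop a k n + trop b k n
  | PDiv a b => trop a k n - trop b k n
  end.

Lemma UDpoly_var j k n : UDpoly (ppoly_var j) k n = trop (PV j) k n.
Proof.
rewrite /UDpoly /ppoly_var map_cons maxl1 /mono_lin.
have coef (i : 'I_7) : nth 0 [seq ((i0 == j) : nat)%:Z | i0 <- iota 0 7] i = (i == j :> nat).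
  by rewrite (nth_map 0%N) ?size_iota // nth_iota.
have [j7|j7] := ltnP j 7; last first.
  rewrite big1 => [|i _]; last by rewrite coef ltn_eqF ?mul0r // (leq_trans (ltn_ord i) j7).
  by case: j j7 {coef} => // j; rewrite ltnS /= => j6; rewrite ltnNge j6.
rewrite (bigD1 (Ordinal j7)) // big1 => [|i ij]; last first.
  by move: ij; rewrite coef -val_eqE /= => /negbTE ->; rewrite mul0r.
rewrite coef /= eqxx mul1r addr0; case: j j7 {coef} => // j; rewrite ltnS => j6 /=.
rewrite j6 (nth_map ord0) ?size_enum_ord //; congr (n _); apply/val_inj.
by rewrite /= nth_enum_ord // inordK.
Qed.

Lemma to_frac_wf e : ppoly_wf (to_frac e).1 /\ ppoly_wf (to_frac e).2.
Proof.
elim: e => [j|j|a IHa b IHb|a IHa b IHb|a IHa b IHb] //=;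
  case: (to_frac a) IHa => g1 h1 [wg1 wh1]; case: (to_frac b) IHb => g2 h2 [wg2 wh2] /=;
  by rewrite ?ppoly_wf_cat ?ppoly_wf_mul.
Qed.

Lemma UD_trop e k n : UD e k n = trop e k n.
Proof.
rewrite /UD; elim: e => [j|j|a IHa b IHb|a IHa b IHb|a IHa b IHb] /=.
- by rewrite UDpoly_var UDpoly_const subr0.
- by rewrite !UDpoly_const subr0.
all: have [wg1 wh1] := to_frac_wf a; have [wg2 wh2] := to_frac_wf b.
all: move: wg1 wh1 wg2 wh2 IHa IHb.
all: case: (to_frac a) => g1 h1; case: (to_frac b) => g2 h2 /= wg1 wh1 wg2 wh2 <- <-.
- rewrite UDpoly_cat ?ppoly_wf_mul // !UDpoly_mul //; lia.
- rewrite !UDpoly_mul //; lia.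
- rewrite !UDpoly_mul //; lia.
Qed.

(** * The bijection [Omega] *)

Lemma mk6E a0 a1 a2 a3 a4 a5 j : (j < 6)%N ->
  mk6 a0 a1 a2 a3 a4 a5 (inord j) = nth 0 [:: a0; a1; a2; a3; a4; a5] j.
Proof. by move=> j6; rewrite ffunE inordK. Qed.

Lemma mk6_eta (n : vec6) :
  n = mk6 (n (inord 0)) (n (inord 1)) (n (inord 2)) (n (inord 3)) (n (inord 4)) (n (inord 5)).
Proof.
apply/ffunP => -[[|[|[|[|[|[|//]]]]]] j6]; rewrite ffunE /=.
all: by congr (n _); apply/val_inj; rewrite /= inordK.
Qed.

Lemma addv_mk6 a0 a1 a2 a3 a4 a5 b0 b1 b2 b3 b4 b5 :
  mk6 a0 a1 a2 a3 a4 a5 + mk6 b0 b1 b2 b3 b4 b5 =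
  mk6 (a0 + b0) (a1 + b1) (a2 + b2) (a3 + b3) (a4 + b4) (a5 + b5).
Proof. by apply/ffunP => -[[|[|[|[|[|[|//]]]]]] j6]; rewrite !ffunE. Qed.

Lemma oppv_mk6 a0 a1 a2 a3 a4 a5 :
  - mk6 a0 a1 a2 a3 a4 a5 = mk6 (- a0) (- a1) (- a2) (- a3) (- a4) (- a5).
Proof. by apply/ffunP => -[[|[|[|[|[|[|//]]]]]] j6]; rewrite !ffunE. Qed.

Definition Omega_vec (n : vec6) : vec6 :=
  mk6 (n (inord 5)) (n (inord 4) - n (inord 5)) (n (inord 3) - 2 * n (inord 4))
      (2 * n (inord 2) - n (inord 3)) (n (inord 1) - n (inord 2)) (n (inord 0) - n (inord 1)).

Lemma Omega_vec_mk6 a0 a1 a2 a3 a4 a5 :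
  Omega_vec (mk6 a0 a1 a2 a3 a4 a5) =
  mk6 a5 (a4 - a5) (a3 - 2 * a4) (2 * a2 - a3) (a1 - a2) (a0 - a1).
Proof. by rewrite /Omega_vec !mk6E. Qed.

Lemma Omega_vecD n m : Omega_vec (n + m) = Omega_vec n + Omega_vec m.
Proof. rewrite [n]mk6_eta [m]mk6_eta addv_mk6 !Omega_vec_mk6 addv_mk6; congr mk6; lia. Qed.

Lemma Omega_vecN n : Omega_vec (- n) = - Omega_vec n.
Proof. rewrite [n]mk6_eta oppv_mk6 !Omega_vec_mk6 oppv_mk6; congr mk6; lia. Qed.

Lemma Omega_inB n : inB (Omega_vec n).
Proof. rewrite /inB /Omega_vec !mk6E //=; lia. Qed.

Definition Omega (n : vec6) : Binf := exist _ (Omega_vec n) (Omega_inB n).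

Definition Omega_inv (b : vec6) : vec6 :=
  let n5 := b (inord 0) in let n4 := n5 + b (inord 1) in
  let n3 := b (inord 2) + 2 * n4 in let n2 := ((b (inord 3) + n3) %/ 2)%Z in
  let n1 := b (inord 4) + n2 in mk6 (b (inord 5) + n1) n1 n2 n3 n4 n5.

Lemma Omega_bij : bijective Omega.
Proof.
exists (fun b => Omega_inv (val b)) => [n|[b bB]].
  by rewrite [RHS]mk6_eta /Omega_inv /= /Omega_vec !mk6E //=; congr mk6; lia.
apply: val_inj; rewrite [RHS]mk6_eta /= /Omega_vec /Omega_inv !mk6E //=.
by move: bB; rewrite /inB => bB; congr mk6; lia.
Qed.

Lemma Omega_vec_z n :
  [/\ z1 (Omega_vec n) = n (inord 0) - n (inord 1) - n (inord 5),
      z2 (Omega_vec n) = n (inord 1) - 3 * n (inord 2) + n (inord 3),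
      z3 (Omega_vec n) = n (inord 3) - 3 * n (inord 4) + n (inord 5)
    & z4 (Omega_vec n) = n (inord 2) - n (inord 3) + n (inord 4)].
Proof. by rewrite /z1 /z2 /z3 /z4 /Omega_vec !mk6E //= /Defs.half; split; lia. Qed.

Lemma Omega_vec_s n : sB (Omega_vec n) = n (inord 0).
Proof. by rewrite /sB /Omega_vec !mk6E //= /Defs.half; lia. Qed.

(** * The operators for [i = 1, 2] *)

Lemma Rfac_inord i j (j6 : (j < 6)%N) : Rfac i (inord j) = Rfac i (Ordinal j6).
Proof. by congr Rfac; apply/val_inj; rewrite /= inordK. Qed.

Lemma eXE i n : eX i n = n + [ffun j => trop (Rfac i j) 1 n].
Proof. by apply/ffunP => j; rewrite !ffunE UD_trop. Qed.

Lemma fXE i n : fX i n = n + [ffun j => trop (Rfac i j) (-1) n].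
Proof. by apply/ffunP => j; rewrite !ffunE UD_trop. Qed.

Lemma Omega_vec_ffun (f : 'I_6 -> int) : Omega_vec [ffun j => f j] =
  mk6 (f (inord 5)) (f (inord 4) - f (inord 5)) (f (inord 3) - 2 * f (inord 4))
      (2 * f (inord 2) - f (inord 3)) (f (inord 1) - f (inord 2)) (f (inord 0) - f (inord 1)).
Proof. by rewrite /Omega_vec !ffunE. Qed.

Lemma Omega_eX1 (i1 : (1 < 3)%N) n :
  Omega_vec (eX (Ordinal i1) n) = eB (Ordinal i1) (Omega_vec n).
Proof.
rewrite eXE Omega_vecD Omega_vec_ffun !Rfac_inord //= /Omega_vec addv_mk6.
rewrite /eB /eB_ /= !mk6E //= /pos.
by case: ifP => h1; [|case: ifP => h2]; congr mk6; lia.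
Qed.

Lemma Omega_fX1 (i1 : (1 < 3)%N) n :
  Omega_vec (fX (Ordinal i1) n) = fB (Ordinal i1) (Omega_vec n).
Proof.
rewrite fXE Omega_vecD Omega_vec_ffun !Rfac_inord //= /Omega_vec addv_mk6.
rewrite /fB /fB_ /= !mk6E //= /pos.
by case: ifP => h1; [|case: ifP => h2]; congr mk6; lia.
Qed.

Lemma Omega_eX2 (i2 : (2 < 3)%N) n :
  Omega_vec (eX (Ordinal i2) n) = eB (Ordinal i2) (Omega_vec n).
Proof.
rewrite eXE Omega_vecD Omega_vec_ffun !Rfac_inord //= /Omega_vec addv_mk6.
rewrite /eB /eB_ /= !mk6E //=.
by case: ifP => h; congr mk6; lia.
Qed.

Lemma Omega_fX2 (i2 : (2 < 3)%N) n :
  Omega_vec (fX (Ordinal i2) n) = fB (Ordinal i2) (Omega_vec n).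
Proof.
rewrite fXE Omega_vecD Omega_vec_ffun !Rfac_inord //= /Omega_vec addv_mk6.
rewrite /fB /fB_ /= !mk6E //=.
by case: ifP => h; congr mk6; lia.
Qed.

(** * The operators for [i = 0] *)

Definition E0_base (n : vec6) : int :=
  n (inord 1) + 3 * n (inord 2) + 2 * n (inord 3) + n (inord 5).

Definition e0_region (b : vec6) : nat :=
  if E1 b then 0 else if E2 b then 1 else if E3 b then 2
  else if E4 b then 3 else if E5 b then 4 else 5.

Definition f0_region (b : vec6) : nat :=
  if F1 b then 0 else if F2 b then 1 else if F3 b then 2
  else if F4 b then 3 else if F5 b then 4 else 5.

(** [E0_mono r] is the monomial of E dominating on the regions (E_(r+1)) and (F_(r+1));
    [D0_cexp`_r], ..., [H0_cexp`_r] are the exponents of c in the matching monomials of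
    D, F, G, H.  The monomials x_0 x_1 x_2 x_3^2 x_4 and x_0 x_1 x_2^2 x_3 x_4^2 of E
    never dominate. *)
Definition E0_mono (r : nat) (n : vec6) : int :=
  nth 0 [:: E0_base n; n (inord 0) + 3 * n (inord 2) + 2 * n (inord 3);
            n (inord 0) + n (inord 1) + 3 * n (inord 3);
            n (inord 0) + n (inord 1) + 3 * n (inord 2) + 3 * n (inord 4);
            n (inord 0) + n (inord 1) + 3 * n (inord 2) + n (inord 3) + n (inord 5);
            2 * n (inord 0) + 3 * n (inord 2) + n (inord 3)] r.

Definition D0_cexp : seq int := [:: 0; 1; 1; 1; 1; 2].
Definition F0_cexp : seq int := [:: 0; 0; 1; 1; 1; 1].
Definition G0_cexp : seq int := [:: 0; 0; 0; 1; 1; 1].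
Definition H0_cexp : seq int := [:: 0; 0; 0; 0; 1; 1].

Definition e0_cond (r : nat) (b : vec6) : bool :=
  nth false [:: E1 b; E2 b; E3 b; E4 b; E5 b; E6 b] r.
Definition f0_cond (r : nat) (b : vec6) : bool :=
  nth false [:: F1 b; F2 b; F3 b; F4 b; F5 b; F6 b] r.

Lemma e0_regionP b : e0_cond (e0_region b) b.
Proof.
rewrite /e0_region /e0_cond.
case: ifP => [//|h1]; case: ifP => [//|h2]; case: ifP => [//|h3].
case: ifP => [//|h4]; case: ifP => [//|h5] /=.
by move: h1 h2 h3 h4 h5; rewrite /E1 /E2 /E3 /E4 /E5 /E6; lia.
Qed.

Lemma f0_regionP b : f0_cond (f0_region b) b.
Proof.
rewrite /f0_region /f0_cond.
case: ifP => [//|h1]; case: ifP => [//|h2]; case: ifP => [//|h3].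
case: ifP => [//|h4]; case: ifP => [//|h5] /=.
by move: h1 h2 h3 h4 h5; rewrite /F1 /F2 /F3 /F4 /F5 /F6; lia.
Qed.

Lemma trop0_e0_cond n r : e0_cond r (Omega_vec n) ->
  [/\ trop E0 1 n = E0_mono r n, trop D0 1 n = E0_mono r n + D0_cexp`_r,
      trop F0 1 n = E0_mono r n + F0_cexp`_r, trop G0 1 n = E0_mono r n + G0_cexp`_r
    & trop H0 1 n = E0_mono r n + H0_cexp`_r].
Proof.
rewrite /e0_cond /E0_mono /E0_base /E1 /E2 /E3 /E4 /E5 /E6.
have [-> -> -> ->] := Omega_vec_z n.
by case: r => [|[|[|[|[|[|r]]]]]] /=; rewrite ?nth_nil // => h; split; lia.
Qed.

Lemma trop0_f0_cond n r : f0_cond r (Omega_vec n) ->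
  [/\ trop E0 (-1) n = E0_mono r n, trop D0 (-1) n = E0_mono r n - D0_cexp`_r,
      trop F0 (-1) n = E0_mono r n - F0_cexp`_r, trop G0 (-1) n = E0_mono r n - G0_cexp`_r
    & trop H0 (-1) n = E0_mono r n - H0_cexp`_r].
Proof.
rewrite /f0_cond /E0_mono /E0_base /F1 /F2 /F3 /F4 /F5 /F6.
have [-> -> -> ->] := Omega_vec_z n.
by case: r => [|[|[|[|[|[|r]]]]]] /=; rewrite ?nth_nil // => h; split; lia.
Qed.

(** The tropicalized factors R_0, ..., R_5 of e_0^c on the region (E_(r+1)). *)
Definition shift0 (r : nat) : vec6 :=
  let d := D0_cexp`_r in let f := F0_cexp`_r in
  let g := G0_cexp`_r in let h := H0_cexp`_r in
  mk6 (d - 1) (f - 1) (g - 1) (d + h - f - 2) (d - g - 1) (d - h - 1).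

Lemma trop_Rfac0 (i0 : (0 < 3)%N) k n :
  [ffun j => trop (Rfac (Ordinal i0) j) k n] =
  mk6 (trop D0 k n - (k + trop E0 k n)) (trop F0 k n - (k + trop E0 k n))
      (trop G0 k n - (k + trop E0 k n))
      (trop D0 k n + trop H0 k n - (k + k + trop E0 k n + trop F0 k n))
      (trop D0 k n - (k + trop G0 k n)) (trop D0 k n - (k + trop H0 k n)).
Proof. by apply/ffunP => -[[|[|[|[|[|[|//]]]]]] j6]; rewrite !ffunE. Qed.

Lemma eX0E (i0 : (0 < 3)%N) n : eX (Ordinal i0) n = n + shift0 (e0_region (Omega_vec n)).
Proof.
rewrite eXE trop_Rfac0; have [-> -> -> -> ->] := trop0_e0_cond (e0_regionP (Omega_vec n)).
by rewrite /shift0; congr (_ + _); congr mk6; lia.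
Qed.

Lemma fX0E (i0 : (0 < 3)%N) n : fX (Ordinal i0) n = n - shift0 (f0_region (Omega_vec n)).
Proof.
rewrite fXE trop_Rfac0; have [-> -> -> -> ->] := trop0_f0_cond (f0_regionP (Omega_vec n)).
by rewrite /shift0 oppv_mk6; congr (_ + _); congr mk6; lia.
Qed.

Lemma eB0E (i0 : (0 < 3)%N) b : eB (Ordinal i0) b = b + Omega_vec (shift0 (e0_region b)).
Proof.
rewrite [X in X + _]mk6_eta /eB /eB_ /e0_region /=.
by do ![case: ifP => _]; rewrite /shift0 /= Omega_vec_mk6 addv_mk6; congr mk6; lia.
Qed.

Lemma fB0E (i0 : (0 < 3)%N) b : fB (Ordinal i0) b = b - Omega_vec (shift0 (f0_region b)).
Proof.
rewrite [X in X - _]mk6_eta /fB /fB_ /f0_region /=.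
by do ![case: ifP => _]; rewrite /shift0 /= Omega_vec_mk6 oppv_mk6 addv_mk6; congr mk6; lia.
Qed.

Lemma Omega_eX0 (i0 : (0 < 3)%N) n :
  Omega_vec (eX (Ordinal i0) n) = eB (Ordinal i0) (Omega_vec n).
Proof. by rewrite eX0E Omega_vecD eB0E. Qed.

Lemma Omega_fX0 (i0 : (0 < 3)%N) n :
  Omega_vec (fX (Ordinal i0) n) = fB (Ordinal i0) (Omega_vec n).
Proof. by rewrite fX0E Omega_vecD Omega_vecN fB0E. Qed.

Lemma Omega_eX i n : Omega_vec (eX i n) = eB i (Omega_vec n).
Proof.
by case: i => -[|[|[|//]]] i; [exact: Omega_eX0 | exact: Omega_eX1 | exact: Omega_eX2].
Qed.

Lemma Omega_fX i n : Omega_vec (fX i n) = fB i (Omega_vec n).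
Proof.
by case: i => -[|[|[|//]]] i; [exact: Omega_fX0 | exact: Omega_fX1 | exact: Omega_fX2].
Qed.

(** * String lengths and weights *)

Lemma trop_E0 k n : trop E0 k n = E0_base n + Defs.maxA (Omega_vec n).
Proof.
rewrite /Defs.maxA; have [-> -> -> ->] := Omega_vec_z n.
by rewrite /maxl /= /E0_base; lia.
Qed.

Lemma trop_eps0 k n :
  trop eps0 k n = trop E0 k n - (3 * n (inord 0) + 3 * n (inord 2) + n (inord 3)).
Proof.
(* Generalizing E0 keeps simpl from unfolding it. *)
by rewrite /eps0; move: E0 => e /=; lia.
Qed.

Lemma Omega_eps i n : epsB i (Omega_vec n) = epsX i n.
Proof.
rewrite /epsB /epsB_ /epsX UD_trop; case: i => -[|[|[|//]]] i.
- rewrite [epsG _]/= trop_eps0 trop_E0 Omega_vec_s; have [-> -> -> ->] := Omega_vec_z n.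
  by rewrite /E0_base; set m := Defs.maxA _; rewrite /=; lia.
- by rewrite /= /Omega_vec !mk6E //= /pos; lia.
- by rewrite /= /Omega_vec !mk6E //= /Defs.half /pos; lia.
Qed.

Lemma Omega_wt i n : wtB i (Omega_vec n) = wtX i n.
Proof.
rewrite /wtB /phiB /epsB /phiB_ /epsB_ /wtX UD_trop; case: i => -[|[|[|//]]] i.
- have [-> -> -> ->] := Omega_vec_z n; set m := Defs.maxA _; rewrite /=; lia.
- by rewrite /= /Omega_vec !mk6E //= /pos; lia.
- by rewrite /= /Omega_vec !mk6E //= /Defs.half /pos; lia.
Qed.

Lemma Omega_phi i n : phiB i (Omega_vec n) = phiX i n.
Proof. by rewrite /phiX -Omega_eps -Omega_wt /wtB addrC subrK. Qed.

Theorem theorem6p1 :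
  exists Omega : vec6 -> Binf,
    bijective Omega /\
    forall (i : 'I_3) (n : vec6),
      [/\ val (Omega (eX i n)) = eB i (val (Omega n)),
          val (Omega (fX i n)) = fB i (val (Omega n)),
          epsB i (val (Omega n)) = epsX i n,
          phiB i (val (Omega n)) = phiX i n
        & wtB i (val (Omega n)) = wtX i n].
Proof.
exists Omega; split; first exact: Omega_bij.
by move=> i n; split; [exact: Omega_eX | exact: Omega_fX | exact: Omega_eps
                       | exact: Omega_phi | exact: Omega_wt].
Qed.
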